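(* Let $q\geq 3$, $n\ge 2$, let $A$ be an $n\times n$ hermitian matrix over $\mathbb{F}_{q^2}$ of rank $n-1$, and let $\mathcal{L}_1\neq\mathcal{L}_2$ be two leaves of $A$. For $i=1,2$ let $N_i$ be the hermitian matrix of rank $n-1$ of which $\mathcal{L}_i^{-1}=\{X^{-1}:X\in\mathcal{L}_i\}$ is a leaf. Then there exist an invertible matrix $Q$ and column vectors $\mathbf{z}_1\neq\mathbf{z}_2$ in $\mathbb{F}_{q^2}^{n-1}$ such that $$N_i=Q\begin{bmatrix}I_{n-1}&\mathbf{z}_i\\ \mathbf{z}_i^\ast&\mathbf{z}_i^\ast\mathbf{z}_i\end{bmatrix}Q^\ast\qquad(i=1,2),$$ and consequently $\operatorname{rank}(N_1-N_2)=2$.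
   Context: $\mathbb{F}_{q^2}$ is the field with $q^2$ elements with involution $\bar x=x^q$, fixed field $\mathbb{F}_q$; $X^\ast=\bar X^\top$; hermitian means $A^\ast=A$. Leaf: if $A$ is an $n\times n$ hermitian matrix of rank $s<n$ and $\mathbf{x}$ is not in the column space of $A$, then $\{A+\lambda\mathbf{x}\mathbf{x}^\ast: 0\ne\lambda\in\mathbb{F}_q\}$ is a leaf of $A$. For a leaf $\mathcal{L}$ of a rank-$(n-1)$ matrix (whose elements are invertible), $\mathcal{L}^{-1}$ is a leaf of a unique hermitian matrix of rank $n-1$. *)

From HB Require Import structures.
From mathcomp Require Import all_boot all_order all_algebra.
Set Implicit Arguments. Unset Strict Implicit. Unset Printing Implicit Defensive.
Import GRing.Theory.
Local Open Scope ring_scope.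

(* F plays the role of F_{q^2} (hypothesis #|F| = q^2 in the theorem);
   the involution is x |-> x^q, with fixed field F_q = {x | x^q = x}. *)
Definition hconj (F : finFieldType) (q : nat) (x : F) : F := x ^+ q.

Definition adjmx (F : finFieldType) (q : nat) (m n : nat) (X : 'M[F]_(m, n))
  : 'M[F]_(n, m) := (map_mx (hconj q) X)^T.

Definition is_herm (F : finFieldType) (q : nat) (n : nat) (A : 'M[F]_n) : Prop :=
  adjmx q A = A.

Definition Fq_nonzero (F : finFieldType) (q : nat) : pred F :=
  [pred l : F | (l ^+ q == l) && (l != 0)].

Definition leaf (F : finFieldType) (q : nat) (n : nat) (A : 'M[F]_n)
  (L : {set 'M[F]_n}) : Prop :=
  is_herm q A /\ (\rank A < n)%N /\
  exists x : 'cV[F]_n, ~~ (x^T <= A^T)%MS /\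
    L = [set A + lambda *: (x *m adjmx q x) | lambda in Fq_nonzero q].

Definition inv_set (F : finFieldType) (n : nat) (L : {set 'M[F]_n}) : {set 'M[F]_n} :=
  [set invmx X | X in L].

Definition zblock (F : finFieldType) (q : nat) (m : nat) (z : 'cV[F]_m) : 'M[F]_(m + 1) :=
  block_mx (1%:M : 'M[F]_m) z (adjmx q z) (adjmx q z *m z).

From HB Require Import structures.
From mathcomp Require Import all_boot all_algebra all_solvable all_field.
From mathcomp Require Import zify.
Set Implicit Arguments.
Unset Strict Implicit.
Unset Printing Implicit Defensive.

Import GRing.Theory.
Local Open Scope ring_scope.

(* Over F_(q^2) every hermitian matrix is congruent to a partial identity
   (anisotropic vectors exist because the trace x + x^q is not identically 0,
   and can be normalised because the norm x x^q maps onto F_q minus 0), so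
   A = R diag(I_m, 0) R^* with R = P^-1.  A vector x outside the column space
   of A is then x = beta R [-z; 1] with beta != 0, and for the shear
   S = [I, -z; 0, 1] the leaf members are
   A + lam x x^* = (R S) diag(I_m, nu) (R S)^*,  nu = lam beta beta^q.
   Hence the inverse leaf consists of the G diag(I_m, nu^-1) G^* with
   G = (S^-1 P)^*.  As q >= 3 there are two distinct values of nu; two members
   of the inverse leaf differ by a multiple of y y^*, which forces its rank m
   base to be N = G diag(I_m, 0) G^* = P^* Z(z) P.  Equal z would give equal
   leaves, and Z(z1) - Z(z2) = [0, d; d^*, c] with d = z1 - z2 != 0 has
   rank 2. *)

Section BlockMatrices.
Variable K : fieldType.

Lemma mulmx1_invmx n (X Y : 'M[K]_n) : X *m Y = 1%:M -> invmx X = Y.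
Proof.
move=> XY; have [uX _] := mulmx1_unit XY.
by rewrite -[invmx X]mulmx1 -XY mulmxA mulVmx // mul1mx.
Qed.

Lemma mxrank_unitl m n (U : 'M[K]_m) (X : 'M[K]_(m, n)) :
  U \in unitmx -> \rank (U *m X) = \rank X.
Proof. by move=> uU; rewrite eqmxMfull ?row_full_unit. Qed.

Lemma mxrank_unitr m n (U : 'M[K]_n) (X : 'M[K]_(m, n)) :
  U \in unitmx -> \rank (X *m U) = \rank X.
Proof. by move=> uU; rewrite mxrankMfree ?row_free_unit. Qed.

Lemma row_unit_completion n (u : 'rV[K]_(1 + n)) : u != 0 ->
  exists2 R : 'M[K]_(1 + n), R \in unitmx & exists2 c, c != 0 & u = c *: usubmx R.
Proof.
move=> u0; exists (row_ebase u); first exact: row_ebase_unit.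
have eu := mulmx_ebase u.
rewrite rank_rV u0 /= (@pid_mx_row K n 1) -mulmxA -[row_ebase u]vsubmxK in eu.
rewrite mul_row_col mul0mx addr0 mul1mx [col_ebase u]mx11_scalar mul_scalar_mx in eu.
exists (col_ebase u 0 0); last by rewrite -{1}eu.
by have := col_ebase_unit u; rewrite unitmxE det_mx11 unitfE.
Qed.

Lemma pid_mx_lift n r :
  block_mx (1%:M : 'M[K]_1) 0 0 (pid_mx r : 'M[K]_n) = pid_mx r.+1.
Proof.
apply/matrixP => i j.
case: (split_ordP i) => i' ->; case: (split_ordP j) => j' ->;
  rewrite ?block_mxEul ?block_mxEur ?block_mxEdl ?block_mxEdr !mxE //=.
- by rewrite (ord1 i') (ord1 j').
- by rewrite (ord1 i').
- by rewrite (ord1 j') add1n.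
Qed.

Definition cornermx m (t : K) : 'M[K]_(m + 1) := block_mx 1%:M 0 0 t%:M.

Lemma cornermx0 m : cornermx m 0 = pid_mx m.
Proof. by rewrite /cornermx (@pid_mx_block K 1 1 m) raddf0. Qed.

Lemma cornermxM m t s : cornermx m t *m cornermx m s = cornermx m (t * s).
Proof.
by rewrite /cornermx mulmx_block !mul1mx !mulmx0 !mul0mx !addr0 !add0r -scalar_mxM.
Qed.

Lemma cornermx_unit m t : t != 0 -> cornermx m t \in unitmx.
Proof. by move=> t0; rewrite unitmxE det_ublock det1 det_scalar1 mul1r unitfE. Qed.

Lemma invmx_cornermx m t : t != 0 -> invmx (cornermx m t) = cornermx m t^-1.
Proof.
by move=> t0; apply: mulmx1_invmx; rewrite cornermxM mulfV // /cornermx -scalar_mx_block.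
Qed.

Lemma cornermxB m t s : cornermx m t - cornermx m s = block_mx 0 0 0 (t - s)%:M.
Proof. by rewrite /cornermx opp_block_mx add_block_mx !subrr raddfB. Qed.

Lemma cornermx_inj m : injective (cornermx m).
Proof.
move=> t s /eqP; rewrite -subr_eq0 cornermxB => /eqP/(congr1 drsubmx).
by rewrite block_mxKdr => /matrixP/(_ 0 0)/eqP; rewrite !mxE mulr1n subr_eq0 => /eqP.
Qed.

Lemma cornermx_pencil m (M Y : 'M[K]_(m + 1)) (mu1 mu2 t1 t2 : K) : t1 != t2 ->
  cornermx m t1 = M + mu1 *: Y -> cornermx m t2 = M + mu2 *: Y ->
  exists tau, M = cornermx m tau.
Proof.
move=> t12 e1 e2.
have eY : (mu1 - mu2) *: Y = block_mx 0 0 0 (t1 - t2)%:M.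
  by rewrite -cornermxB e1 e2 scalerBl opprD addrACA subrr add0r.
have mu12 : mu1 - mu2 != 0.
  apply: contra_neq t12 => /eqP; rewrite subr_eq0 => /eqP mu12.
  by apply: (@cornermx_inj m); rewrite e1 e2 mu12.
exists (t1 - mu1 * ((mu1 - mu2)^-1 * (t1 - t2))).
rewrite (_ : M = cornermx m t1 - mu1 *: Y); last by rewrite e1 addrK.
have -> : Y = (mu1 - mu2)^-1 *: block_mx 0 0 0 (t1 - t2)%:M.
  by rewrite -eY scalerA mulVf // scale1r.
rewrite scalerA scale_block_mx !scaler0 scale_scalar_mx.
by rewrite /cornermx opp_block_mx add_block_mx !oppr0 !addr0 -raddfB mulrA.
Qed.

Definition shearmx {m} (z : 'cV[K]_m) : 'M[K]_(m + 1) := block_mx 1%:M z 0 1%:M.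

Lemma shearmxN m (z : 'cV[K]_m) : shearmx (- z) *m shearmx z = 1%:M.
Proof.
rewrite /shearmx mulmx_block !mul1mx !mulmx1 !mul0mx !addr0 !add0r addrC subrr.
by rewrite mulmx0 add0r -scalar_mx_block.
Qed.

Lemma shearmx_unit m (z : 'cV[K]_m) : shearmx z \in unitmx.
Proof. by rewrite unitmxE det_ublock !det1 mulr1 unitr1. Qed.

Lemma mxrank_block0 m (d : 'cV[K]_m) (e : 'rV[K]_m) (c : 'M[K]_1) :
  d != 0 -> e != 0 -> \rank (block_mx 0 d e c) = 2%N.
Proof.
move=> d0 e0; apply/eqP; rewrite eqn_leq; apply/andP; split.
  have -> : block_mx 0 d e c =
     row_mx (col_mx d c) (col_mx 0 1%:M) *m col_mx (row_mx 0 1%:M) (row_mx e 0).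
    rewrite mul_row_col !mul_col_row !mulmx0 !mulmx1 !mul0mx !mul1mx.
    by rewrite add_block_mx !addr0 !add0r.
  exact: leq_trans (mxrankM_maxl _ _) (rank_leq_col _).
have [i [j0 di]] := matrix0Pn _ d0; rewrite (ord1 j0) in di.
have [i0 [j ej]] := matrix0Pn _ e0; rewrite (ord1 i0) in ej.
set Ll := block_mx (delta_mx 0 i : 'rV[K]_m) 0 0 (1%:M : 'M[K]_1).
set Rr := row_mx (col_mx (0 : 'cV[K]_m) 1%:M) (col_mx (delta_mx j 0) (0 : 'M[K]_1)).
have minor : Ll *m (block_mx 0 d e c *m Rr) =
    block_mx (delta_mx 0 i *m d) 0 c (e *m delta_mx j 0) :> 'M[K]_(1 + 1).
  rewrite /Rr /Ll mul_mx_row !mul_block_col !mul0mx !mulmx0 !mulmx1 !add0r !addr0.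
  by rewrite mul_mx_row !mul_block_col block_mxEh !mul0mx !mulmx0 !mul1mx !addr0 !add0r.
have : \rank (Ll *m (block_mx 0 d e c *m Rr)) = 2%N.
  rewrite minor mxrank_unit // unitmxE det_lblock !det_mx11 unitfE.
  by rewrite -rowE -colE !mxE mulf_neq0.
move <-; exact: leq_trans (mxrankM_maxr _ _) (mxrankM_maxl _ _).
Qed.

End BlockMatrices.

Section HermitianForms.
Variables (F : finFieldType) (q : nat).
Hypotheses (hq : (3 <= q)%N) (hF : #|F| = (q ^ 2)%N).

Local Notation cj := (@hconj F q).
Local Notation adj := (@adjmx F q _ _).

Lemma hconjK : involutive cj.
Proof. by move=> x; rewrite /hconj -exprM mulnn -hF expf_card. Qed.

Lemma pchar_nat_q : [pchar F].-nat q.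
Proof.
have [p pr_p chp] := finPcharP F.
have : pgroup p [set: F] by apply: abelem_pgroup; apply: fin_ring_pchar_abelem.
rewrite /pgroup cardsT hF pnatX orbF => pq.
by rewrite (eq_pnat _ (pcharf_eq chp)).
Qed.

Lemma hconjD (x y : F) : cj (x + y) = cj x + cj y.
Proof. by rewrite /hconj exprDn_pchar ?pchar_nat_q. Qed.

Lemma hconjB (x y : F) : cj (x - y) = cj x - cj y.
Proof. by apply: (addIr (cj y)); rewrite -hconjD !subrK. Qed.

Lemma hconj_monoid_morphism : monoid_morphism cj.
Proof. by split=> [|x y]; rewrite /hconj ?expr1n ?exprMn. Qed.

HB.instance Definition _ := GRing.isZmodMorphism.Build F F cj hconjB.
HB.instance Definition _ := GRing.isMonoidMorphism.Build F F cj hconj_monoid_morphism.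

Lemma cardF_pred : (#|F|.-1 = q.+1 * q.-1)%N.
Proof. by rewrite hF; case: q hq => // k _; rewrite -mulnn /=; nia. Qed.

Lemma cardF_gt1 : (1 < #|F|)%N.
Proof. by rewrite hF -mulnn; have := hq; nia. Qed.

Lemma expf_card_pred {x : F} : x != 0 -> x ^+ #|F|.-1 = 1.
Proof.
move=> x0; apply: (mulfI x0); rewrite mulr1 -exprS prednK ?expf_card //.
exact: ltn_trans cardF_gt1.
Qed.

Lemma prim_root_cardF : exists w : F, (#|F|.-1).-primitive_root w.
Proof.
have : has (#|F|.-1).-primitive_root (enum (predC1 (0 : F))).
  apply: has_prim_root; last by rewrite -cardE cardC1.
  - by rewrite -ltnS prednK ?cardF_gt1 // ltnW // cardF_gt1.
  - by apply/allP=> x; rewrite mem_enum /= => x0; rewrite unity_rootE expf_card_pred.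
  - exact: enum_uniq.
by case/hasP => w _ pw; exists w.
Qed.

(* The nonzero elements of F_q are the powers w^(k(q+1)) of a generator w, and
   w^k has norm w^(k(q+1)). *)
Lemma hconj_norm_surj (l : F) : l ^+ q = l -> l != 0 -> exists c, c * cj c = l.
Proof.
move=> lq l0; have [w pw] := prim_root_cardF.
have [[i _] /= ei] := prim_rootP pw (expf_card_pred l0).
move: lq; rewrite ei -exprM => /eqP; rewrite (eq_prim_root_expr pw).
rewrite eqn_mod_dvd ?leq_pmulr ?(leq_trans _ hq) // -{2}(muln1 i) -mulnBr subn1.
rewrite cardF_pred dvdn_pmul2r; last by case: q hq => [|[|]].
case/dvdnP => k ek; exists (w ^+ k).
by rewrite /hconj -exprM -exprD ek -mulnS mulnC.
Qed.

Lemma Fq_nontrivial : exists l : F, [/\ l ^+ q = l, l != 0 & l != 1].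
Proof.
have [w pw] := prim_root_cardF.
have w0 : w != 0 by rewrite (prim_root_eq0 pw) -lt0n (prim_order_gt0 pw).
exists (w ^+ q.+1); split; last 2 first.
- by rewrite expf_neq0.
- rewrite -(expr0 w) (eq_prim_root_expr pw) mod0n modn_small //.
  by rewrite cardF_pred; have := hq; nia.
apply/eqP; rewrite -exprM (eq_prim_root_expr pw).
rewrite eqn_mod_dvd ?leq_pmulr ?(leq_trans _ hq) // -{2}(muln1 q.+1) -mulnBr subn1.
by rewrite cardF_pred dvdnn.
Qed.

Lemma hconj_trace_neq0 : exists t : F, t + cj t != 0.
Proof.
have [w pw] := prim_root_cardF.
exists w; apply/negP; rewrite addr_eq0 => /eqP e.
have : (w ^+ q) ^+ 2 = w ^+ 2 by rewrite {2}e sqrrN.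
rewrite -exprM => /eqP; rewrite (eq_prim_root_expr pw) eqn_mod_dvd; last by have := hq; nia.
move/dvdn_leq; rewrite cardF_pred; have := hq; nia.
Qed.

Lemma adjE m n (X : 'M[F]_(m, n)) i j : adj X i j = cj (X j i).
Proof. by rewrite !mxE. Qed.

Lemma adjK m n (X : 'M[F]_(m, n)) : adj (adj X) = X.
Proof. by apply/matrixP => i j; rewrite !adjE hconjK. Qed.

Lemma adjM m n p (X : 'M[F]_(m, n)) (Y : 'M[F]_(n, p)) :
  adj (X *m Y) = adj Y *m adj X.
Proof. by rewrite /adjmx map_mxM trmx_mul. Qed.

Lemma adjD m n (X Y : 'M[F]_(m, n)) : adj (X + Y) = adj X + adj Y.
Proof. by apply/matrixP => i j; rewrite !mxE rmorphD. Qed.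

Lemma adjN m n (X : 'M[F]_(m, n)) : adj (- X) = - adj X.
Proof. by apply/matrixP => i j; rewrite !mxE rmorphN. Qed.

Lemma adjB m n (X Y : 'M[F]_(m, n)) : adj (X - Y) = adj X - adj Y.
Proof. by rewrite adjD adjN. Qed.

Lemma adjZ m n a (X : 'M[F]_(m, n)) : adj (a *: X) = cj a *: adj X.
Proof. by apply/matrixP => i j; rewrite !mxE rmorphM. Qed.

Lemma adj0 m n : adj (0 : 'M[F]_(m, n)) = 0.
Proof. by apply/matrixP => i j; rewrite !mxE rmorph0. Qed.

Lemma adj1 n : adj (1%:M : 'M[F]_n) = 1%:M.
Proof. by rewrite /adjmx map_scalar_mx tr_scalar_mx rmorph1. Qed.

Lemma adj_block m1 m2 n1 n2 (a : 'M[F]_(m1, n1)) (b : 'M[F]_(m1, n2))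
  (c : 'M[F]_(m2, n1)) (d : 'M[F]_(m2, n2)) :
  adj (block_mx a b c d) = block_mx (adj a) (adj c) (adj b) (adj d).
Proof. by rewrite /adjmx map_block_mx tr_block_mx. Qed.

Lemma adj_col m1 m2 n (a : 'M[F]_(m1, n)) (b : 'M[F]_(m2, n)) :
  adj (col_mx a b) = row_mx (adj a) (adj b).
Proof. by rewrite /adjmx map_col_mx tr_col_mx. Qed.

Lemma adj_unit n (P : 'M[F]_n) : P \in unitmx -> adj P \in unitmx.
Proof. by move=> uP; rewrite /adjmx unitmx_tr map_unitmx. Qed.

Lemma herm_entry n (A : 'M[F]_n) : adj A = A -> forall i j, A i j = cj (A j i).
Proof. by move=> hA i j; rewrite -{1}hA adjE. Qed.

Lemma herm_congr m n (X : 'M[F]_(m, n)) (A : 'M[F]_n) :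
  adj A = A -> adj (X *m A *m adj X) = X *m A *m adj X.
Proof. by move=> hA; rewrite !adjM adjK hA mulmxA. Qed.

Lemma delta_herm_form n (A : 'M[F]_n) (i j : 'I_n) :
  (delta_mx 0 i : 'rV[F]_n) *m A *m adj (delta_mx 0 j) = (A i j)%:M.
Proof.
have -> : adj (delta_mx 0 j : 'rV[F]_n) = delta_mx j 0.
  by apply/matrixP => a b; rewrite !mxE rmorph_nat andbC.
rewrite -rowE -colE; apply/matrixP => a b.
by rewrite !mxE !ord1 eqxx mulr1n.
Qed.

(* If all diagonal entries vanish, a nonzero entry A i j gives the vector
   e_i + (t / A j i) e_j, whose value is the trace t + cj t. *)
Lemma herm_anisotropic n (A : 'M[F]_n) : adj A = A -> A != 0 ->
  exists u : 'rV[F]_n, (u *m A *m adj u) 0 0 != 0.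
Proof.
move=> hA /matrix0Pn [j [i Aji]].
have diag k : A k k != 0 -> exists u : 'rV[F]_n, (u *m A *m adj u) 0 0 != 0.
  by exists (delta_mx 0 k); rewrite delta_herm_form mxE eqxx mulr1n.
have [/diag//|/negbNE/eqP Aii0] := boolP (A i i != 0).
have [/diag//|/negbNE/eqP Ajj0] := boolP (A j j != 0).
have [t ht] := hconj_trace_neq0.
exists (delta_mx 0 i + (t / A j i) *: delta_mx 0 j).
rewrite adjD adjZ !mulmxDl !mulmxDr -!scalemxAl -!scalemxAr !delta_herm_form.
rewrite !mxE !eqxx !mulr1n Aii0 Ajj0 !mulr0 add0r addr0.
by rewrite (herm_entry hA i j) -rmorphM -mulrA mulVf // mulr1 addrC.
Qed.

(* Complete an anisotropic vector u to an invertible matrix and rescale u by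
   the inverse of a norm square root of u A u^*. *)
Lemma herm_split_unit n (A : 'M[F]_(1 + n)) : adj A = A -> A != 0 ->
  exists2 P : 'M[F]_(1 + n), P \in unitmx &
    exists b C, adj C = C /\ P *m A *m adj P = block_mx 1%:M b (adj b) C.
Proof.
move=> hA A0; have [u hu] := herm_anisotropic hA A0.
have u0 : u != 0 by apply: contraNneq hu => ->; rewrite !mul0mx mxE.
have [R uR [c c0 eu]] := row_unit_completion u0.
set U := usubmx R; set d := (U *m A *m adj U) 0 0.
have d0 : d != 0.
  apply: contra hu => /eqP d0; rewrite eu adjZ -!scalemxAl -scalemxAr scalerA.
  by rewrite [_ *m adj _]mx11_scalar -/d d0 raddf0 scaler0 mxE.
have [|e he] := hconj_norm_surj _ d0.
  by rewrite /d {2}(herm_entry (herm_congr U hA) 0 0).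
have e0 : e != 0 by apply: contraNneq d0 => e0; rewrite -he e0 mul0r.
set X1 := e^-1 *: U; set X2 := dsubmx R.
exists (col_mx X1 X2).
  have -> : col_mx X1 X2 = block_mx (e^-1%:M : 'M_1) 0 0 1%:M *m R.
    by rewrite -{1}[R]vsubmxK mul_block_col !mul0mx addr0 add0r mul1mx mul_scalar_mx.
  by rewrite unitmx_mul uR andbT unitmxE det_ublock det_scalar1 det1 mulr1 unitfE invr_eq0.
exists (X1 *m A *m adj X2), (X2 *m A *m adj X2); split; first exact: herm_congr.
have X11 : X1 *m A *m adj X1 = 1%:M.
  rewrite /X1 adjZ -!scalemxAl -scalemxAr scalerA [U *m A *m adj U]mx11_scalar -/d -he.
  by rewrite scale_scalar_mx fmorphV mulrACA !mulVf ?fmorph_eq0 // mulr1.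
have X21 : X2 *m A *m adj X1 = adj (X1 *m A *m adj X2) by rewrite !adjM adjK hA mulmxA.
by rewrite adj_col mul_col_mx !mul_col_row X11 X21.
Qed.

Lemma herm_block_elim n (b : 'rV[F]_n) (C : 'M[F]_n) :
  block_mx 1%:M 0 (- adj b) 1%:M *m block_mx 1%:M b (adj b) C
    *m adj (block_mx 1%:M 0 (- adj b) 1%:M)
  = block_mx 1%:M 0 0 (C - adj b *m b).
Proof.
rewrite adj_block adjN adjK !adj1 adj0 !mulmx_block.
rewrite !mul1mx !mulmx1 !mul0mx !mulmx0 !addr0 !addNr mul0mx add0r mulmxN mul1mx addNr.
by rewrite addrC mulNmx.
Qed.

Definition pid_congruent n (A : 'M[F]_n) :=
  exists2 P, P \in unitmx & exists2 r, (r <= n)%N & P *m A *m adj P = pid_mx r.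

Lemma pid_congruent_step n (A : 'M[F]_(1 + n)) :
  (forall B : 'M[F]_n, adj B = B -> pid_congruent B) -> adj A = A -> pid_congruent A.
Proof.
move=> IH hA; have [->|A0] := eqVneq A 0.
  by exists 1%:M; [exact: unitmx1 | exists 0%N; rewrite // mulmx0 mul0mx pid_mx_0].
have [P1 uP1 [b [C [hC eP1]]]] := herm_split_unit hA A0.
set E := block_mx (1%:M : 'M_1) 0 (- adj b) 1%:M.
have [|P2 uP2 [r rn eP2]] := IH (C - adj b *m b).
  by rewrite adjB adjM adjK hC.
set D := block_mx (1%:M : 'M_1) 0 0 P2.
exists (D *m E *m P1).
  rewrite !unitmx_mul uP1 andbT !unitmxE det_ublock det_lblock !det1 !mul1r.
  by rewrite -unitmxE uP2 unitr1.
exists r.+1 => //.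
have -> : D *m E *m P1 *m A *m adj (D *m E *m P1)
          = D *m (E *m (P1 *m A *m adj P1) *m adj E) *m adj D by rewrite !adjM !mulmxA.
rewrite eP1 herm_block_elim adj_block !adj0 adj1 !mulmx_block.
by rewrite !mul1mx !mulmx1 !mul0mx !mulmx0 !addr0 !add0r eP2 mul0mx pid_mx_lift.
Qed.

Lemma herm_congr_pid n (A : 'M[F]_n) : adj A = A ->
  exists2 P, P \in unitmx & P *m A *m adj P = pid_mx (\rank A).
Proof.
move=> hA; suff [P uP [r rn eP]] : pid_congruent A.
  exists P => //; suff -> : \rank A = r by [].
  by rewrite -(mxrank_unitl A uP) -(mxrank_unitr (P *m A) (adj_unit uP)) eP rank_pid_mx.
elim: n A hA => [|n IH] A hA; last exact: pid_congruent_step.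
by exists 1%:M; [exact: unitmx1 | exists 0%N => //; apply/matrixP => [[]]].
Qed.

Lemma invmx_congr n (M D : 'M[F]_n) : M \in unitmx -> D \in unitmx ->
  invmx (M *m D *m adj M) = adj (invmx M) *m invmx D *m invmx M.
Proof.
move=> uM uD; apply: mulmx1_invmx.
rewrite !mulmxA -[M *m D *m adj M *m adj (invmx M)]mulmxA -adjM mulVmx // adj1 mulmx1.
by rewrite -[M *m D *m invmx D]mulmxA mulmxV // mulmx1 mulmxV.
Qed.

Lemma congr_invK n (G X : 'M[F]_n) : G \in unitmx ->
  invmx G *m (G *m X *m adj G) *m adj (invmx G) = X.
Proof.
move=> uG; rewrite !mulmxA mulVmx // mul1mx -mulmxA -adjM mulVmx //.
by rewrite adj1 mulmx1.
Qed.

Lemma zblock_shear m (z : 'cV[F]_m) :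
  adj (shearmx z) *m pid_mx m *m shearmx z = zblock q z.
Proof.
rewrite (@pid_mx_block F 1 1 m) adj_block !adj1 adj0 !mulmx_block.
by rewrite !mul1mx !mulmx1 !mul0mx !mulmx0 !addr0 mul1mx.
Qed.

Lemma pid_rank1_shear m (z : 'cV[F]_m) nu :
  pid_mx m + nu *: (col_mx (- z) 1%:M *m adj (col_mx (- z) 1%:M))
  = shearmx (- z) *m cornermx m nu *m adj (shearmx (- z)).
Proof.
rewrite (@pid_mx_block F 1 1 m) adj_col adj_block adjN !adj1 adj0 mul_col_row.
rewrite !mulmx_block !mul1mx !mulmx1 !mul0mx !mulmx0 !addr0 !add0r.
rewrite scale_block_mx add_block_mx !add0r mul_mx_scalar mul_scalar_mx.
by rewrite -scalemxAl scalemx1.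
Qed.

(* In coordinates where A = diag(I_m, 0), a vector outside the column space
   has a nonzero last coordinate beta. *)
Lemma leaf_vector_shape m (A P : 'M[F]_(m + 1)) (x : 'cV[F]_(m + 1)) :
  P \in unitmx -> P *m A *m adj P = pid_mx m -> ~~ (x^T <= A^T)%MS ->
  exists z : 'cV[F]_m,
    exists2 beta, beta != 0 & x = beta *: (invmx P *m col_mx (- z) 1%:M).
Proof.
move=> uP hP xA; set R := invmx P; set u := P *m x.
have uR : R \in unitmx by rewrite unitmx_inv.
have eA : A = R *m pid_mx m *m adj R by rewrite -hP congr_invK.
have ex : x = R *m u by rewrite /u mulmxA mulVmx // mul1mx.
set beta := dsubmx u 0 0.
have b0 : beta != 0.
  apply: contra xA => /eqP b0.
  have eu : u = col_mx (usubmx u) 0.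
    by rewrite -[u in LHS]vsubmxK [dsubmx u]mx11_scalar -/beta b0 raddf0.
  have pid_u : pid_mx m *m u = u.
    by rewrite {1}eu (@pid_mx_block F 1 1 m) mul_block_col !mul1mx !mul0mx !addr0 -eu.
  have -> : x = A *m (invmx (adj R) *m u).
    by rewrite eA -!mulmxA mulKVmx ?adj_unit // pid_u.
  by rewrite trmx_mul submxMl.
exists (- (beta^-1 *: usubmx u)), beta => //.
rewrite opprK ex scalemxAr scale_col_mx scalerA mulfV // scale1r scalemx1.
by rewrite /beta -mx11_scalar vsubmxK.
Qed.

Lemma leaf_member_inv m (A P : 'M[F]_(m + 1)) (x : 'cV[F]_(m + 1)) z beta lam :
  P \in unitmx -> P *m A *m adj P = pid_mx m -> beta != 0 -> lam != 0 ->
  x = beta *: (invmx P *m col_mx (- z) 1%:M) ->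
  invmx (A + lam *: (x *m adj x)) =
    adj (shearmx z *m P) *m cornermx m (lam * (beta * cj beta))^-1 *m (shearmx z *m P).
Proof.
move=> uP hP b0 l0 ex; set nu := lam * (beta * cj beta).
have nu0 : nu != 0 by rewrite !mulf_neq0 ?fmorph_eq0.
set M := invmx P *m shearmx (- z).
have eM : A + lam *: (x *m adj x) = M *m cornermx m nu *m adj M.
  have -> : M *m cornermx m nu *m adj M
          = invmx P *m (shearmx (- z) *m cornermx m nu *m adj (shearmx (- z)))
              *m adj (invmx P).
    by rewrite /M adjM !mulmxA.
  rewrite -pid_rank1_shear mulmxDr mulmxDl -hP congr_invK //; congr (_ + _).
  rewrite ex adjZ adjM -scalemxAr -scalemxAl -scalemxAr -scalemxAl !scalerA !mulmxA.
  by rewrite /nu [cj beta * _]mulrC.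
have iM : invmx M = shearmx z *m P.
  by apply: mulmx1_invmx; rewrite /M mulmxA -[_ *m shearmx z]mulmxA shearmxN mulmx1 mulVmx.
rewrite eM invmx_congr ?unitmx_mul ?unitmx_inv ?uP ?shearmx_unit ?cornermx_unit //.
by rewrite iM invmx_cornermx.
Qed.

Lemma congr_corner_pencil m (G N : 'M[F]_(m + 1)) (y : 'cV[F]_(m + 1)) t1 t2 mu1 mu2 :
  G \in unitmx -> \rank N = m -> t1 != t2 ->
  G *m cornermx m t1 *m adj G = N + mu1 *: (y *m adj y) ->
  G *m cornermx m t2 *m adj G = N + mu2 *: (y *m adj y) ->
  N = G *m pid_mx m *m adj G.
Proof.
move=> uG rN t12 e1 e2; set Gi := invmx G.
have back mu : Gi *m (N + mu *: (y *m adj y)) *m adj Gi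
    = Gi *m N *m adj Gi + mu *: (Gi *m (y *m adj y) *m adj Gi).
  by rewrite mulmxDr mulmxDl -scalemxAr -scalemxAl.
have [tau eK] : exists tau, Gi *m N *m adj Gi = cornermx m tau.
  apply: (cornermx_pencil (Y := Gi *m (y *m adj y) *m adj Gi) (mu1 := mu1) (mu2 := mu2) t12);
    by rewrite -back -?e1 -?e2 /Gi congr_invK.
have tau0 : tau = 0.
  have uGi : Gi \in unitmx by rewrite unitmx_inv.
  apply/eqP/negPn/negP => tau0; move: rN.
  rewrite -(mxrank_unitl N uGi) -(mxrank_unitr (Gi *m N) (adj_unit uGi)) eK.
  by rewrite mxrank_unit ?cornermx_unit // addn1 => /esym/n_Sn.
by rewrite -cornermx0 -tau0 -eK -[G in RHS]invmxK congr_invK ?unitmx_inv.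
Qed.

Lemma in_Fq_nonzero (l : F) : (l \in Fq_nonzero q) = (l ^+ q == l) && (l != 0).
Proof. by []. Qed.

Lemma Fq_nonzeroM (a b : F) :
  a \in Fq_nonzero q -> b \in Fq_nonzero q -> a * b \in Fq_nonzero q.
Proof.
rewrite !in_Fq_nonzero => /andP [/eqP ha a0] /andP [/eqP hb b0].
by rewrite exprMn ha hb eqxx mulf_neq0.
Qed.

Lemma Fq_nonzeroV (a : F) : a \in Fq_nonzero q -> a^-1 \in Fq_nonzero q.
Proof. by rewrite !in_Fq_nonzero exprVn invr_eq0 => /andP [/eqP -> ->]; rewrite eqxx. Qed.

Lemma Fq_nonzero_norm (b : F) : b != 0 -> b * cj b \in Fq_nonzero q.
Proof.
move=> b0; rewrite in_Fq_nonzero mulf_neq0 ?fmorph_eq0 // andbT.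
by rewrite /hconj exprMn -exprM mulnn -hF expf_card mulrC.
Qed.

Lemma leaf_rescale n (A : 'M[F]_n) (x : 'cV[F]_n) beta : beta != 0 ->
  [set A + lam *: ((beta *: x) *m adj (beta *: x)) | lam in Fq_nonzero q]
  = [set A + lam *: (x *m adj x) | lam in Fq_nonzero q].
Proof.
move=> b0; set c := beta * cj beta.
have Fc : c \in Fq_nonzero q by exact: Fq_nonzero_norm.
have c0 : c != 0 by move: Fc; rewrite in_Fq_nonzero => /andP [].
have eS lam : A + lam *: ((beta *: x) *m adj (beta *: x)) = A + (lam * c) *: (x *m adj x).
  by rewrite adjZ -scalemxAl -scalemxAr !scalerA mulrA.
apply/eqP; rewrite eqEsubset; apply/andP; split; apply/subsetP => _ /imsetP [lam Fl ->].
  by rewrite eS; apply: imset_f; exact: Fq_nonzeroM.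
apply/imsetP; exists (lam / c); first by rewrite Fq_nonzeroM ?Fq_nonzeroV.
by rewrite eS divfK.
Qed.

Lemma mxrank_zblockB m (z1 z2 : 'cV[F]_m) :
  z1 != z2 -> \rank (zblock q z1 - zblock q z2) = 2%N.
Proof.
move=> z12; have -> : zblock q z1 - zblock q z2
    = block_mx 0 (z1 - z2) (adj (z1 - z2)) (adj z1 *m z1 - adj z2 *m z2).
  by rewrite /zblock opp_block_mx add_block_mx subrr adjB.
apply: mxrank_block0; first by rewrite subr_eq0.
by apply: contra_neq z12 => /(congr1 adj); rewrite adjK adj0 => /eqP; rewrite subr_eq0 => /eqP.
Qed.

Lemma inv_leaf_base m (A P N : 'M[F]_(m + 1)) (x : 'cV[F]_(m + 1)) z beta :
  P \in unitmx -> P *m A *m adj P = pid_mx m -> beta != 0 ->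
  x = beta *: (invmx P *m col_mx (- z) 1%:M) -> \rank N = m ->
  leaf q N (inv_set [set A + lam *: (x *m adj x) | lam in Fq_nonzero q]) ->
  N = adj P *m zblock q z *m P.
Proof.
move=> uP hP b0 ex rN [_ [_ [y [_ eS]]]].
set G := adj (shearmx z *m P); set c := beta * cj beta.
have c0 : c != 0 by rewrite mulf_neq0 ?fmorph_eq0.
have member lam : lam \in Fq_nonzero q ->
    exists mu, G *m cornermx m (lam * c)^-1 *m adj G = N + mu *: (y *m adj y).
  move=> Fl; have l0 : lam != 0 by move: Fl; rewrite in_Fq_nonzero => /andP [].
  have : invmx (A + lam *: (x *m adj x))
         \in inv_set [set A + k *: (x *m adj x) | k in Fq_nonzero q].
    by apply: imset_f; apply: imset_f.
  rewrite eS (leaf_member_inv uP hP b0 l0 ex) => /imsetP [mu _ e].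
  by exists mu; rewrite /G adjK.
have [l [lq l0 l1]] := Fq_nontrivial.
have [|mu1 e1] := member 1; first by rewrite in_Fq_nonzero expr1n eqxx oner_neq0.
have [|mu2 e2] := member l; first by rewrite in_Fq_nonzero lq eqxx.
have t12 : (1 * c)^-1 != (l * c)^-1.
  by rewrite (inj_eq invr_inj) (inj_eq (mulIf c0)) eq_sym.
rewrite (congr_corner_pencil _ rN t12 e1 e2); last first.
  by rewrite adj_unit // unitmx_mul shearmx_unit.
by rewrite /G adjK adjM -zblock_shear !mulmxA.
Qed.

End HermitianForms.

Theorem corollary3p2 (F : finFieldType) (q m : nat)
  (hq : (3 <= q)%N) (hF : #|F| = (q ^ 2)%N) (hm : (1 <= m)%N)
  (A : 'M[F]_(m + 1)) (hA : is_herm q A) (rA : \rank A = m)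
  (L1 L2 : {set 'M[F]_(m + 1)})
  (hL1 : leaf q A L1) (hL2 : leaf q A L2) (hL12 : L1 != L2)
  (N1 N2 : 'M[F]_(m + 1))
  (hN1 : is_herm q N1) (rN1 : \rank N1 = m) (lN1 : leaf q N1 (inv_set L1))
  (hN2 : is_herm q N2) (rN2 : \rank N2 = m) (lN2 : leaf q N2 (inv_set L2)) :
  exists Q : 'M[F]_(m + 1), Q \in unitmx /\
    exists z1 z2 : 'cV[F]_m, z1 != z2 /\
      N1 = Q *m zblock q z1 *m adjmx q Q /\
      N2 = Q *m zblock q z2 *m adjmx q Q /\
      \rank (N1 - N2) = 2%N.
Proof.
have [P uP hP] := herm_congr_pid hq hF hA; rewrite rA in hP.
case: hL1 => _ [_ [x1 [xA1 eL1]]]; case: hL2 => _ [_ [x2 [xA2 eL2]]].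
rewrite eL1 in lN1; rewrite eL2 in lN2.
have [z1 [b1 b10 ex1]] := leaf_vector_shape hF uP hP xA1.
have [z2 [b2 b20 ex2]] := leaf_vector_shape hF uP hP xA2.
have eN1 := inv_leaf_base hq hF uP hP b10 ex1 rN1 lN1.
have eN2 := inv_leaf_base hq hF uP hP b20 ex2 rN2 lN2.
have z12 : z1 != z2.
  apply: contra_neq hL12 => ez.
  by rewrite eL1 eL2 ex1 ex2 !(leaf_rescale hF) // ez.
exists (adjmx q P); split; first exact: (adj_unit hF uP).
exists z1, z2; rewrite eN1 eN2 (adjK hF); do !split => //.
rewrite -mulmxBl -mulmxBr mxrank_unitr // mxrank_unitl ?(adj_unit hF) //.
exact: (mxrank_zblockB hF).
Qed.
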